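(* Fix $p\in(\tfrac12,1)$ and let $\{B_n\}_{n\ge1}$ be a sequence with $B_n\in\{1,\dots,n\}$ and $\lim_{n\to\infty}B_n/n=q$ for some $q\in[0,1]$. Let $\sigma^n$ be the unique symmetric non-trivial Bayes-Nash equilibrium of $\Gamma(B_n,n)$, and let $x_n=\Pr_{\sigma^n}(\sum_{i=1}^n a_i\ge B_n\mid\omega=H,a_1=1)$ and $y_n=\Pr_{\sigma^n}(\sum_{i=1}^n a_i\ge B_n\mid\omega=L,a_1=1)$. Then $$\lim_{n\to\infty}\Big(x_n-\Pr_{\sigma^n}\big(\textstyle\sum_{i=1}^n a_i\ge B_n\mid\omega=H\big)\Big)=0\quad\text{and}\quad\lim_{n\to\infty}\Big(y_n-\Pr_{\sigma^n}\big(\textstyle\sum_{i=1}^n a_i\ge B_n\mid\omega=L\big)\Big)=0.$$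
   Context: The crowdfunding game $\Gamma(B,n)$ with parameter $p\in(\tfrac12,1)$: there are $n$ players and a threshold $B\in\{1,\dots,n\}$. A state $\omega\in\{H,L\}$ is drawn with probability $\tfrac12$ each. Conditional on $\omega$, each player $i$ independently receives a signal $s_i\in\{H,L\}$ with $\Pr(s_i=\omega\mid\omega)=p$. Players simultaneously choose $a_i\in\{0,1\}$. Player $i$'s payoff is $1$ if $a_i=1$, $\sum_j a_j\ge B$ and $\omega=H$; $-1$ if $a_i=1$, $\sum_j a_j\ge B$ and $\omega=L$; and $0$ otherwise. A strategy is a map $\sigma_i:\{H,L\}\to[0,1]$ giving the probability of action $1$ after each signal; Bayes-Nash equilibrium is defined as usual. A profile is non-trivial if $\Pr_\sigma(\sum_i a_i\ge B)>0$, and symmetric if all players use the same strategy. It is known that each $\Gamma(B,n)$ has a unique symmetric non-trivial Bayes-Nash equilibrium, in which each player plays $1$ with probability $1$ after signal $H$ and with some probability $\lambda\in[0,1)$ after signal $L$. *)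

From HB Require Import structures.
From mathcomp Require Import all_boot all_order all_algebra.
From mathcomp Require Import all_classical all_reals all_analysis.
Set Implicit Arguments. Unset Strict Implicit. Unset Printing Implicit Defensive.
Import Order.TTheory GRing.Theory Num.Theory.
Local Open Scope ring_scope.

(* Encoding: the state omega and the signals are booleans, true = H, false = L.
   An action a_i is a boolean, true = 1, false = 0.
   A (behavioural) strategy of player i is a map  bool -> R  giving the
   probability of playing 1 after each signal; a profile for n players is
   'I_n -> bool -> R. *)

Section Crowdfunding.
Variable R : realType.

Definition profile (n : nat) := 'I_n -> bool -> R.

Definition valid_profile n (sigma : profile n) : Prop :=
  forall i s, 0 <= sigma i s <= 1.

Definition nplay n (a : {ffun 'I_n -> bool}) : nat := (\sum_(i < n) (a i : nat))%N.

Definition weight (p : R) n (sigma : profile n) (w : bool)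
    (s a : {ffun 'I_n -> bool}) : R :=
  (1 / 2) * (\prod_(i < n) (if s i == w then p else 1 - p))
          * (\prod_(i < n) (if a i then sigma i (s i) else 1 - sigma i (s i))).

Definition prob (p : R) n (sigma : profile n)
    (E : bool -> {ffun 'I_n -> bool} -> {ffun 'I_n -> bool} -> bool) : R :=
  \sum_(w : bool) \sum_(s : {ffun 'I_n -> bool}) \sum_(a : {ffun 'I_n -> bool})
     (if E w s a then weight p sigma w s a else 0).

Definition cprob (p : R) n (sigma : profile n) E C : R :=
  prob p sigma (fun w s a => E w s a && C w s a) / prob p sigma C.

Definition success n (B : nat) (w : bool) (s a : {ffun 'I_n -> bool}) : bool :=
  (B <= nplay a)%N.

Definition ex_post_payoff n (B : nat) (i : 'I_n) (w : bool)
    (s a : {ffun 'I_n -> bool}) : R :=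
  if a i && (B <= nplay a)%N then (if w then 1 else -1) else 0.

Definition payoff (p : R) n (B : nat) (sigma : profile n) (i : 'I_n) : R :=
  \sum_(w : bool) \sum_(s : {ffun 'I_n -> bool}) \sum_(a : {ffun 'I_n -> bool})
     weight p sigma w s a * ex_post_payoff B i w s a.

Definition deviate n (sigma : profile n) (i : 'I_n) (tau : bool -> R) : profile n :=
  fun j => if j == i then tau else sigma j.

Definition is_BNE (p : R) n (B : nat) (sigma : profile n) : Prop :=
  valid_profile sigma /\
  forall (i : 'I_n) (tau : bool -> R), (forall s, 0 <= tau s <= 1) ->
    payoff p B (deviate sigma i tau) i <= payoff p B sigma i.

Definition symmetric n (sigma : profile n) : Prop :=
  forall (i j : 'I_n) (s : bool), sigma i s = sigma j s.

Definition nontrivial (p : R) n (B : nat) (sigma : profile n) : Prop :=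
  0 < prob p sigma (@success n B).

Definition sym_nontriv_BNE (p : R) n (B : nat) (sigma : profile n) : Prop :=
  is_BNE p B sigma /\ symmetric sigma /\ nontrivial p B sigma.

Definition stateH n (w : bool) (s a : {ffun 'I_n -> bool}) : bool := w.
Definition stateL n (w : bool) (s a : {ffun 'I_n -> bool}) : bool := ~~ w.
(* omega = H and a_1 = 1 (player 1 is the player with index 0) *)
Definition stateH_a1 n (w : bool) (s a : {ffun 'I_n -> bool}) : bool :=
  w && [exists i : 'I_n, (val i == 0)%N && a i].
Definition stateL_a1 n (w : bool) (s a : {ffun 'I_n -> bool}) : bool :=
  ~~ w && [exists i : 'I_n, (val i == 0)%N && a i].

End Crowdfunding.

(* Given the state, players act independently; under a symmetric profile in which one player
   invests with probability r in state w, the number of investors among the other n - 1 players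
   is Bin(n - 1, r).  Hence Pr(success | w, a_1 = 1) = Pr(Bin(n - 1, r) >= B - 1), whereas
   Pr(success | w) = r Pr(Bin(n - 1, r) >= B - 1) + (1 - r) Pr(Bin(n - 1, r) >= B), and the gap
   is (1 - r) Pr(Bin(n - 1, r) = B - 1).
   A player's payoff is linear in her strategy, and since p > 1/2 the coefficient of investing
   after a high signal is positive; so in equilibrium she invests after H, whence r >= 1 - p.
   Finally (1 - r) Pr(Bin(m, r) = j) -> 0 uniformly in j and r in [1 - p, 1]: either 1 - r is
   small, or the variance r (1 - r) (m + 1) is large, and then the t + 1 probabilities from the
   mode onwards all exceed half of the mode, so the mode is at most 2 / (t + 1). *)

From Pilot Require Import Defs.
From HB Require Import structures.
From mathcomp Require Import all_boot all_order all_algebra.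
From mathcomp Require Import all_classical all_reals all_analysis.
From mathcomp Require Import ring lra.
Import Order.TTheory GRing.Theory Num.Theory.
Import numFieldNormedType.Exports.
Local Open Scope classical_set_scope.
Local Open Scope ring_scope.

Set Implicit Arguments. Unset Strict Implicit. Unset Printing Implicit Defensive.

Section CoefTail.
Variable R : realType.
Implicit Types (P : {poly R}) (c : R).

Definition coef_tail (k : nat) P : R := P.[1] - \sum_(j < k) P`_j.

Lemma coef_tail0 P : coef_tail 0 P = P.[1].
Proof. by rewrite /coef_tail big_ord0 subr0. Qed.

Lemma coef_tail_subS k P : coef_tail k P - coef_tail k.+1 P = P`_k.
Proof. by rewrite /coef_tail big_ord_recr /=; lra. Qed.

Lemma coef_tailD k : {morph coef_tail k : P Q / P + Q}.
Proof.
move=> P Q; rewrite /coef_tail hornerD.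
under eq_bigr do rewrite coefD.
by rewrite big_split /=; lra.
Qed.

Lemma coef_tail_poly0 k : coef_tail k 0 = 0.
Proof. by rewrite /coef_tail horner0 big1 ?subr0 // => j _; rewrite coef0. Qed.

Lemma coef_tailCM k c P : coef_tail k (c%:P * P) = c * coef_tail k P.
Proof.
rewrite /coef_tail hornerCM mulrBr mulr_sumr.
by under eq_bigr do rewrite coefCM.
Qed.

Lemma coef_tailXM k P : coef_tail k ('X * P) = coef_tail k.-1 P.
Proof.
case: k => [|k]; first by rewrite !coef_tail0 mulrC hornerMX mulr1.
rewrite /coef_tail mulrC hornerMX mulr1 big_ord_recl /= coefMX /= add0r.
by under eq_bigr do rewrite coefMX /=.
Qed.

Lemma coef_tail1 k : coef_tail k.+1 (1 : {poly R}) = 0.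
Proof.
rewrite /coef_tail hornerC big_ord_recl coef1 /= big1 ?addr0 ?subrr // => j _.
by rewrite coef1.
Qed.

Lemma coef_tailXn k j : coef_tail k ('X^j : {poly R}) = (k <= j)%:R.
Proof.
elim: j k => [|j IHj] [|k]; rewrite ?coef_tail0 ?hornerXn ?expr1n //.
  by rewrite expr0 coef_tail1.
by rewrite exprS coef_tailXM IHj.
Qed.

End CoefTail.

Section BinomialGF.
Variable R : realType.

Definition bool_gf (c : bool -> R) : {poly R} := (c false)%:P + (c true)%:P * 'X.

Lemma horner_bool_gf c x : (bool_gf c).[x] = c false + c true * x.
Proof. by rewrite /bool_gf hornerD hornerC hornerCM hornerX. Qed.

Lemma prod_bool_gf n (c : 'I_n -> bool -> R) :
  \prod_(i < n) bool_gf (c i) =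
  \sum_(a : {ffun 'I_n -> bool}) (\prod_i c i (a i))%:P * 'X^(nplay a).
Proof.
have -> : \prod_(i < n) bool_gf (c i) = \prod_(i < n) \sum_(b : bool) (c i b)%:P * 'X^b.
  by apply: eq_bigr => i _; rewrite big_bool /= expr0 mulr1 expr1 addrC.
rewrite bigA_distr_bigA /=; apply: eq_bigr => a _.
rewrite big_split /= rmorph_prod; congr (_ * _).
by rewrite (big_morph (fun k => 'X^k) (exprD _) (expr0 _)).
Qed.

Lemma sum_nplay_ge n (c : 'I_n -> bool -> R) k :
  \sum_(a : {ffun 'I_n -> bool}) (if (k <= nplay a)%N then \prod_i c i (a i) else 0)
  = coef_tail k (\prod_(i < n) bool_gf (c i)).
Proof.
rewrite prod_bool_gf (big_morph _ (coef_tailD k) (@coef_tail_poly0 R k)).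
apply: eq_bigr => a _; rewrite coef_tailCM coef_tailXn.
by case: (k <= nplay a)%N; rewrite ?mulr1 ?mulr0.
Qed.

Lemma sum_first_nplay_ge m (c : 'I_m.+1 -> bool -> R) k :
  \sum_(a : {ffun 'I_m.+1 -> bool})
     (if a ord0 && (k <= nplay a)%N then \prod_i c i (a i) else 0)
  = c ord0 true * coef_tail k.-1 (\prod_(i < m) bool_gf (c (lift ord0 i))).
Proof.
(* Zeroing the weight of [a ord0 = false] turns the constraint [a ord0] into the factor [c ord0 true * 'X]. *)
pose c' i b := if (i == ord0) && ~~ b then 0 else c i b.
have -> : \sum_(a : {ffun 'I_m.+1 -> bool})
            (if a ord0 && (k <= nplay a)%N then \prod_i c i (a i) else 0)
        = \sum_(a : {ffun 'I_m.+1 -> bool})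
            (if (k <= nplay a)%N then \prod_i c' i (a i) else 0).
  apply: eq_bigr => a _; case: (k <= nplay a)%N; rewrite ?andbF //.
  case a0: (a ord0) => /=; last by rewrite (bigD1 ord0) //= /c' a0 mul0r.
  by apply: eq_bigr => i _; rewrite /c'; case: eqP => [->|]; rewrite ?a0.
rewrite sum_nplay_ge big_ord_recl.
have -> : bool_gf (c' ord0) = (c ord0 true)%:P * 'X by rewrite /bool_gf /c' /= add0r.
by rewrite -mulrA coef_tailCM coef_tailXM.
Qed.

Definition binomial_gf (m : nat) (r : R) : {poly R} := bool_gf (bernoulli_pmf r) ^+ m.

Lemma prod_bool_gf_const n (r : R) :
  \prod_(i < n) bool_gf (bernoulli_pmf r) = binomial_gf n r.
Proof. by rewrite prodr_const card_ord. Qed.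

Lemma coef_binomial_gf m r j : (binomial_gf m r)`_j = binomial_pmf m r j.
Proof.
rewrite /binomial_gf /bool_gf exprDn coef_sum.
under eq_bigr => i _ do
  rewrite coefMn exprMn -!rmorphXn mulrA -rmorphM coefCM coefXn mulrC.
rewrite /binomial_pmf; case: (leqP j m) => [jm|mj].
  rewrite (bigD1 (Ordinal (jm : j < m.+1)%N)) //= eqxx mul1r big1 ?addr0.
    by rewrite mulrC.
  move=> i ij; rewrite (_ : (j == i) = false) ?mul0r ?mul0rn //.
  by apply/negbTE; apply: contra ij => /eqP ji; apply/eqP/val_inj.
rewrite bin_small // mulr0n big1 // => i _.
have : (i < j)%N by apply: leq_trans (ltn_ord i) _.
rewrite ltn_neqAle => /andP[/negbTE ij _].
by rewrite eq_sym ij mul0r mul0rn.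
Qed.

End BinomialGF.

Section BinomialTail.
Variable R : realType.
Implicit Types (r s : R) (m k : nat).

(* [binomial_gf m r] generates Bin(m, r), so this is Pr(Bin(m, r) >= k). *)
Definition binomial_tail m r k : R := coef_tail k (binomial_gf m r).

Lemma binomial_tail0 m r : binomial_tail m r 0 = 1.
Proof. by rewrite /binomial_tail coef_tail0 horner_exp horner_bool_gf /= mulr1 subrK expr1n. Qed.

Lemma binomial_tailS m r k :
  binomial_tail m.+1 r k.+1 = (1 - r) * binomial_tail m r k.+1 + r * binomial_tail m r k.
Proof.
by rewrite /binomial_tail /binomial_gf exprS {1}/bool_gf mulrDl coef_tailD
  coef_tailCM -mulrA coef_tailCM coef_tailXM.
Qed.

Lemma binomial_tail_subS m r k :
  binomial_tail m r k - binomial_tail m r k.+1 = binomial_pmf m r k.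
Proof. by rewrite coef_tail_subS coef_binomial_gf. Qed.

Lemma binomial_tail_prob0 m k : binomial_tail m 0 k.+1 = 0.
Proof.
rewrite /binomial_tail /binomial_gf /bool_gf /= subr0 mul0r addr0 expr1n.
exact: coef_tail1.
Qed.

Lemma binomial_tail_ge0 m r k : 0 <= r <= 1 -> 0 <= binomial_tail m r k.
Proof.
move=> /andP[r0 r1]; elim: m k => [|m IHm] [|k]; rewrite ?binomial_tail0 //.
  by rewrite /binomial_tail /binomial_gf expr0 coef_tail1.
by rewrite binomial_tailS addr_ge0 // mulr_ge0 ?IHm // subr_ge0.
Qed.

Lemma binomial_tail_leS m r k : 0 <= r <= 1 ->
  binomial_tail m r k.+1 <= binomial_tail m r k.
Proof. by move=> r01; rewrite -subr_ge0 binomial_tail_subS binomial_pmf_ge0. Qed.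

Lemma binomial_tail_gt0 m r k : 0 < r <= 1 -> (k <= m)%N -> 0 < binomial_tail m r k.
Proof.
move=> /andP[r0 r1]; have r01 : 0 <= r <= 1 by rewrite r1 ltW.
elim: m k => [|m IHm] [|k] km; rewrite ?binomial_tail0 ?ltr01 //.
rewrite binomial_tailS ltr_wpDl ?mulr_gt0 ?IHm //.
by rewrite mulr_ge0 ?binomial_tail_ge0 // subr_ge0.
Qed.

Lemma le_binomial_tail m k r s : 0 <= r -> r <= s -> s <= 1 ->
  binomial_tail m r k <= binomial_tail m s k.
Proof.
move=> r0 rs s1; have r01 : 0 <= r <= 1 by rewrite r0 (le_trans rs s1).
have s01 : 0 <= s <= 1 by rewrite s1 (le_trans r0 rs).
elim: m k => [|m IHm] [|k]; rewrite ?binomial_tail0 //.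
rewrite !binomial_tailS.
have := IHm k.+1; have := IHm k; have := binomial_tail_leS m k s01.
set A := binomial_tail m r k.+1; set A' := binomial_tail m s k.+1.
set C := binomial_tail m r k; set C' := binomial_tail m s k.
(* (1 - s) A' + s C' - (1 - r) A - r C = (1 - r)(A' - A) + r (C' - C) + (s - r)(C' - A') *)
move=> AC' CC' AA'; nra.
Qed.

Lemma binomial_tail_le1 m r k : 0 <= r <= 1 -> binomial_tail m r k <= 1.
Proof.
move=> r01; elim: k => [|k IHk]; first by rewrite binomial_tail0.
exact: le_trans (binomial_tail_leS m k r01) IHk.
Qed.

End BinomialTail.

Section BinomialPmf.
Variable R : realType.
Implicit Types (r : R) (m j k t : nat).

Lemma binomial_pmfE m r j :
  binomial_pmf m r j = 'C(m, j)%:R * r ^+ j * (1 - r) ^+ (m - j).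
Proof. by rewrite /binomial_pmf -mulrA mulr_natl. Qed.

Lemma binomial_pmf_succ m r j :
  j.+1%:R * (1 - r) * binomial_pmf m r j.+1 = (m - j)%:R * r * binomial_pmf m r j.
Proof.
rewrite !binomial_pmfE; case: (ltnP j m) => jm; last first.
  by rewrite bin_small ?ltnS // (_ : m - j = 0)%N ?mul0r ?mulr0 //; apply/eqP; rewrite subn_eq0.
have e := congr1 (GRing.natmul (1 : R)) (mul_bin_left m j); rewrite !natrM in e.
have dE : (m - j = (m - j.+1).+1)%N by rewrite subnS prednK // subn_gt0.
rewrite dE in e *.
transitivity (j.+1%:R * 'C(m, j.+1)%:R * (r ^+ j.+1 * (1 - r) ^+ (m - j.+1).+1)).
  by rewrite !exprS; ring.
by rewrite e !exprS; ring.
Qed.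

Lemma sum_binomial_pmf_window m r k t : 0 <= r <= 1 ->
  \sum_(i < t) binomial_pmf m r (k + i) <= 1.
Proof.
move=> r01; have telescope : \sum_(i < t) binomial_pmf m r (k + i)
    = binomial_tail m r k - binomial_tail m r (k + t).
  elim: t => [|t IHt]; first by rewrite big_ord0 addn0 subrr.
  by rewrite big_ord_recr /= IHt -binomial_tail_subS addnS; ring.
rewrite telescope; have := binomial_tail_le1 m k r01.
have := binomial_tail_ge0 m (k + t) r01; lra.
Qed.

Lemma binomial_pmf_le1 m r j : 0 <= r <= 1 -> binomial_pmf m r j <= 1.
Proof. by move=> r01; have := sum_binomial_pmf_window m j 1 r01; rewrite big_ord1 addn0. Qed.

Lemma binomial_pmf_gt0 m r j : 0 < r < 1 -> (j <= m)%N -> 0 < binomial_pmf m r j.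
Proof.
move=> /andP[r0 r1] jm.
by rewrite /binomial_pmf pmulrn_lgt0 ?bin_gt0 // mulr_gt0 ?exprn_gt0 // subr_gt0.
Qed.

Lemma exists_binomial_mode m r : 0 <= r <= 1 ->
  exists2 k, (k <= m)%N & forall j, binomial_pmf m r j <= binomial_pmf m r k.
Proof.
move=> r01; case: (@arg_maxP _ _ _ (ord0 : 'I_m.+1) predT (binomial_pmf m r \o val)) => //=.
move=> k _ kmax; exists k; first by rewrite -ltnS.
move=> j; case: (leqP j m) => [jm|mj]; first exact: (kmax (Ordinal (jm : j < m.+1)%N)).
by rewrite /binomial_pmf bin_small // mulr0n binomial_pmf_ge0.
Qed.

Lemma binomial_mode_bounds m r k : 0 < r < 1 -> (k <= m)%N ->
  (forall j, binomial_pmf m r j <= binomial_pmf m r k) ->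
  k%:R <= r * m.+1%:R <= k.+1%:R.
Proof.
move=> r01 km kmax; have bk := binomial_pmf_gt0 r01 km.
have /andP[r0 r1] := r01; rewrite -!natr1; apply/andP; split.
  case: k km kmax bk => [|k] km kmax bk; first by rewrite mulr_ge0 ?ltW // addr_gt0.
  have := binomial_pmf_succ m r k; rewrite natrB 1?ltnW // -!natr1.
  have mk : 0 <= (m%:R - k%:R) * r.
    by apply: mulr_ge0; rewrite ?subr_ge0 ?ler_nat ?ltW // ltnW.
  move=> e; have := kmax k; nra.
have := binomial_pmf_succ m r k; rewrite natrB // -natr1.
have k1 : 0 <= (k%:R + 1) * (1 - r) by rewrite mulr_ge0 ?subr_ge0 ?ltW // addr_ge0.
move=> e; have := kmax k.+1; nra.
Qed.

(* By [binomial_pmf_succ], [(j + 1)(1 - r)(b j - b j.+1) = b j (j + 1 - r (m + 1))]; past the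
   mode the factor [(j + 1)(1 - r)] exceeds the variance, and the right side is at most [t b k]. *)
Lemma binomial_pmf_step_near_mode m r k t j : 0 < r < 1 ->
  (forall i, binomial_pmf m r i <= binomial_pmf m r k) ->
  k%:R <= r * m.+1%:R <= k.+1%:R ->
  (2 * t ^ 2)%:R <= r * (1 - r) * m.+1%:R ->
  (k <= j)%N -> (j < k + t)%N -> (j < m)%N ->
  2 * t%:R * (binomial_pmf m r j - binomial_pmf m r j.+1) <= binomial_pmf m r k.
Proof.
move=> r01 kmax /andP[lo hi] hV kj jkt jm; have /andP[r0 r1] := r01.
have r01w : 0 <= r <= 1 by rewrite !ltW.
rewrite natrM natrX -[m.+1%:R]natr1 in hV; rewrite -!natr1 in lo hi.
have := binomial_pmf_succ m r j; rewrite (natrB _ (ltnW jm)) -natr1.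
have := binomial_pmf_ge0 m j.+1 r01w; have := binomial_pmf_ge0 m j r01w.
have := kmax j; set M := binomial_pmf m r k.
rewrite -(ler_nat R) in kj; rewrite -(ler_nat R) natrD -natr1 in jkt.
set bj := binomial_pmf m r j; set bJ := binomial_pmf m r j.+1.
move=> bjM bj0 bJ0 e.
have key : (j%:R + 1) * (1 - r) * (bj - bJ) <= M * t%:R.
  have -> : (j%:R + 1) * (1 - r) * (bj - bJ) = bj * (j%:R + 1 - r * (m%:R + 1)).
    by rewrite mulrBr e; ring.
  apply: le_trans (_ : bj * t%:R <= _); first by rewrite ler_wpM2l //; lra.
  by rewrite ler_wpM2r //; lra.
have var : 2 * t%:R ^+ 2 <= (j%:R + 1) * (1 - r).
  have : 0 <= (j%:R + 1 - r * (m%:R + 1)) * (1 - r) by rewrite mulr_ge0 //; lra.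
  lra.
have t0 : 0 < t%:R :> R by lra.
case: (lerP (bj - bJ) 0) => D0.
  by apply: le_trans (le_trans bj0 bjM); rewrite pmulr_rle0 // mulr_gt0.
rewrite -(ler_pM2l t0) [t%:R * M]mulrC.
have -> : t%:R * (2 * t%:R * (bj - bJ)) = 2 * t%:R ^+ 2 * (bj - bJ) by ring.
by apply: le_trans key; rewrite ler_wpM2r // ltW.
Qed.

Lemma binomial_pmf_near_mode m r k t : 0 < r < 1 -> (k <= m)%N ->
  (forall j, binomial_pmf m r j <= binomial_pmf m r k) ->
  (2 * t ^ 2)%:R <= r * (1 - r) * m.+1%:R ->
  forall i, (i <= t)%N -> binomial_pmf m r k <= 2 * binomial_pmf m r (k + i).
Proof.
move=> r01 km kmax hV; have /andP[r0 r1] := r01.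
have bounds := binomial_mode_bounds r01 km kmax; have /andP[lo _] := bounds.
set M := binomial_pmf m r k; have M0 : 0 <= M := ltW (binomial_pmf_gt0 r01 km).
case: (posnP t) => [-> i|t0]; first by rewrite leqn0 => /eqP ->; rewrite addn0; lra.
have t1 : 1 <= t%:R :> R by rewrite ler1n.
have ktm : (k + t <= m)%N.
  rewrite -(ler_nat R) natrD; rewrite natrM natrX -natr1 in hV lo.
  have : 0 <= (1 - r) ^+ 2 * (m%:R + 1) by apply: mulr_ge0; rewrite ?sqr_ge0 ?addr_ge0.
  have : 0 <= (2 * t%:R + 1) * (t%:R - 1) :> R by apply: mulr_ge0; lra.
  lra.
have plateau i : (i <= t)%N ->
    (2 * t%:R - i%:R) * M <= 2 * t%:R * binomial_pmf m r (k + i).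
  elim: i => [_|i IHi it]; first by rewrite addn0 subr0.
  have kit : (k + i < k + t)%N by rewrite ltn_add2l.
  have := binomial_pmf_step_near_mode r01 kmax bounds hV (leq_addr _ _) kit
    (leq_trans kit ktm).
  have := IHi (ltnW it); rewrite addnS -natr1 -/M; lra.
move=> i it; have t0' : 0 < t%:R :> R by lra.
rewrite -(ler_pM2l t0') mulrA (mulrC _ 2); apply: le_trans (plateau i it).
by rewrite ler_wpM2r //; rewrite -(ler_nat R) in it; lra.
Qed.

Lemma binomial_pmf_le_of_variance m r j t : 0 < r < 1 ->
  (2 * t ^ 2)%:R <= r * (1 - r) * m.+1%:R -> t.+1%:R * binomial_pmf m r j <= 2.
Proof.
move=> r01 hV; have r01w : 0 <= r <= 1 by case/andP: r01 => r0 r1; rewrite !ltW.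
have [k km kmax] := exists_binomial_mode m r01w.
have near_k : t.+1%:R * binomial_pmf m r k <= 2 * \sum_(i < t.+1) binomial_pmf m r (k + i).
  have -> : t.+1%:R * binomial_pmf m r k = \sum_(i < t.+1) binomial_pmf m r k.
    by rewrite sumr_const card_ord mulr_natl.
  rewrite mulr_sumr; apply: ler_sum => i _.
  exact: binomial_pmf_near_mode r01 km kmax hV _ (ltn_ord i).
have := sum_binomial_pmf_window m k t.+1 r01w.
have : t.+1%:R * binomial_pmf m r j <= t.+1%:R * binomial_pmf m r k by rewrite ler_wpM2l.
lra.
Qed.

Lemma onem_binomial_pmf_small (d e : R) : 0 < d -> 0 < e ->
  exists N : nat, forall m r j, (N <= m)%N -> d <= r <= 1 ->
    (1 - r) * binomial_pmf m r j <= e.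
Proof.
move=> d0 e0; set t := Num.bound (2 / e).
have et : 2 <= e * t.+1%:R.
  have := archi_boundP (ltW (divr_gt0 (ltr0n R 2) e0)); rewrite -/t ltr_pdivrMr //.
  by rewrite -natr1; lra.
set N := Num.bound ((2 * t ^ 2)%:R / (d * e)).
exists N => m r j Nm /andP[dr r1].
have r01w : 0 <= r <= 1 by rewrite r1 (le_trans (ltW d0)).
have b0 := binomial_pmf_ge0 m j r01w; have b1 := binomial_pmf_le1 m j r01w.
case: (lerP (1 - r) e) => [se|es]; first by nra.
have r01 : 0 < r < 1 by rewrite (lt_le_trans d0) //=; lra.
have hV : (2 * t ^ 2)%:R <= r * (1 - r) * m.+1%:R.
  have := archi_boundP (ltW (divr_gt0 (ltr0n R (2 * t ^ 2)) (mulr_gt0 d0 e0))).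
  rewrite -/N ltr_pdivrMr ?mulr_gt0 // => hN.
  have : N%:R <= m.+1%:R :> R by rewrite ler_nat ltnW.
  have : d * e <= r * (1 - r) by rewrite ler_pM // ltW.
  have : 0 <= d * e by rewrite mulr_ge0 // ltW.
  have : 0 <= m.+1%:R :> R by [].
  by nra.
have := binomial_pmf_le_of_variance j r01 hV; nra.
Qed.
End BinomialPmf.

Section ActionLaw.
Variables (R : realType) (p : R).

Definition act_rate (w : bool) (st : bool -> R) : R :=
  \sum_(s : bool) bernoulli_pmf p (s == w) * st s.

Lemma act_rateE w st :
  act_rate w st = bernoulli_pmf p w * st true + bernoulli_pmf p (~~ w) * st false.
Proof. by rewrite /act_rate big_bool; case: w. Qed.

Lemma sum_signal_bernoulli w st b :
  \sum_(s : bool) bernoulli_pmf p (s == w) * bernoulli_pmf (st s) b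
  = bernoulli_pmf (act_rate w st) b.
Proof. by rewrite /act_rate !big_bool /bernoulli_pmf; case: b; case: w => /=; ring. Qed.

Definition action_prob n (sigma : profile R n) w (a : {ffun 'I_n -> bool}) : R :=
  \prod_i bernoulli_pmf (act_rate w (sigma i)) (a i).

Lemma sum_weight_signals n (sigma : profile R n) w a :
  \sum_(s : {ffun 'I_n -> bool}) weight p sigma w s a = 2^-1 * action_prob sigma w a.
Proof.
rewrite /weight; under eq_bigr do rewrite -mulrA -big_split /=.
rewrite -mulr_sumr div1r /action_prob; congr (_ * _).
rewrite -(bigA_distr_bigA (fun i s => bernoulli_pmf p (s == w) * bernoulli_pmf (sigma i s) (a i))).
by apply: eq_bigr => i _; rewrite sum_signal_bernoulli.
Qed.

Lemma eq_prob n (sigma : profile R n) E1 E2 :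
  (forall w s a, E1 w s a = E2 w s a) -> prob p sigma E1 = prob p sigma E2.
Proof.
move=> E12; rewrite /prob; apply: eq_bigr => w _; apply: eq_bigr => s _.
by apply: eq_bigr => a _; rewrite E12.
Qed.

Lemma probE n (sigma : profile R n) (E : bool -> {ffun 'I_n -> bool} -> bool) :
  prob p sigma (fun w _ a => E w a)
  = 2^-1 * \sum_(w : bool) \sum_(a : {ffun 'I_n -> bool})
             (if E w a then action_prob sigma w a else 0).
Proof.
rewrite /prob mulr_sumr; apply: eq_bigr => w _; rewrite exchange_big mulr_sumr.
apply: eq_bigr => a _; case: (E w a); first exact: sum_weight_signals.
by rewrite big1 ?mulr0.
Qed.

Lemma prob_state n (sigma : profile R n) w0 (E : {ffun 'I_n -> bool} -> bool) :
  prob p sigma (fun w _ a => (w == w0) && E a)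
  = 2^-1 * \sum_(a : {ffun 'I_n -> bool}) (if E a then action_prob sigma w0 a else 0).
Proof.
rewrite (probE sigma (fun w a => (w == w0) && E a)) big_bool.
by case: w0; rewrite /= big1_eq ?addr0 ?add0r.
Qed.

Lemma payoffE n B (sigma : profile R n) i :
  payoff p B sigma i
  = 2^-1 * \sum_(w : bool) (if w then 1 else -1) * \sum_(a : {ffun 'I_n -> bool})
             (if a i && (B <= nplay a)%N then action_prob sigma w a else 0).
Proof.
rewrite /payoff mulr_sumr; apply: eq_bigr => w _; rewrite exchange_big !mulr_sumr.
apply: eq_bigr => a _; rewrite /ex_post_payoff.
case: (_ && _); last by rewrite !mulr0 big1 // => s _; rewrite mulr0.
by rewrite -big_distrl /= sum_weight_signals; ring.
Qed.

Lemma sum_action_prob_nplay_ge n (sigma : profile R n) w r k :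
  (forall i, act_rate w (sigma i) = r) ->
  \sum_(a : {ffun 'I_n -> bool}) (if (k <= nplay a)%N then action_prob sigma w a else 0)
  = binomial_tail n r k.
Proof.
move=> rate; rewrite (sum_nplay_ge (fun i => bernoulli_pmf (act_rate w (sigma i)))).
by under eq_bigr do rewrite rate; rewrite prod_bool_gf_const.
Qed.

Lemma sum_action_prob_first m (sigma : profile R m.+1) w r k :
  (forall i, act_rate w (sigma (lift ord0 i)) = r) ->
  \sum_(a : {ffun 'I_m.+1 -> bool})
     (if a ord0 && (k <= nplay a)%N then action_prob sigma w a else 0)
  = act_rate w (sigma ord0) * binomial_tail m r k.-1.
Proof.
move=> rate; rewrite (sum_first_nplay_ge (fun i => bernoulli_pmf (act_rate w (sigma i)))).
by under eq_bigr do rewrite rate; rewrite prod_bool_gf_const.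
Qed.

End ActionLaw.

Section Equilibrium.
Variables (R : realType) (p : R).

Lemma act_rate_sym n (sigma : profile R n) w i j :
  Defs.symmetric sigma -> act_rate p w (sigma i) = act_rate p w (sigma j).
Proof. by move=> sym; apply: eq_bigr => s _; rewrite (sym i j). Qed.

Lemma act_rate01 w (st : bool -> R) : 0 <= p <= 1 -> (forall s, 0 <= st s <= 1) ->
  0 <= act_rate p w st <= 1.
Proof.
move=> /andP[p0 p1] st01; have /andP[a0 a1] := st01 true; have /andP[b0 b1] := st01 false.
by rewrite act_rateE; apply/andP; case: w => /=; split; nra.
Qed.

Definition others_tail m B (st : bool -> R) w := binomial_tail m (act_rate p w st) B.-1.

Lemma payoff_first m B (pi : profile R m.+1) st :
  (forall j, pi (lift ord0 j) = st) ->
  payoff p B pi ord0 = 2^-1 *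
    (act_rate p true (pi ord0) * others_tail m B st true
     - act_rate p false (pi ord0) * others_tail m B st false).
Proof.
move=> others; have rate w j : act_rate p w (pi (lift ord0 j)) = act_rate p w st.
  by rewrite others.
rewrite payoffE big_bool /= (sum_action_prob_first _ (rate true)).
by rewrite (sum_action_prob_first _ (rate false)) /others_tail; ring.
Qed.

Lemma act_rate_gt0_of_nontrivial m B (sigma : profile R m.+1) w :
  0 < p < 1 -> (0 < B)%N -> valid_profile sigma -> Defs.symmetric sigma ->
  nontrivial p B sigma -> 0 < act_rate p w (sigma ord0).
Proof.
move=> /andP[p0 p1] B1 valid sym nontriv.
have /andP[a0 _] := valid ord0 true; have /andP[b0 _] := valid ord0 false.
have p01 : 0 <= p <= 1 by rewrite !ltW.
have /andP[r0 _] := act_rate01 w p01 (valid ord0).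
rewrite lt_neqAle r0 andbT eq_sym; apply/negP => /eqP rate0.
have [a_eq0 b_eq0] : sigma ord0 true = 0 /\ sigma ord0 false = 0.
  by move: rate0; rewrite act_rateE; case: (w) => /= rate0; split; nra.
have rate_all0 v : act_rate p v (sigma ord0) = 0.
  by rewrite act_rateE a_eq0 b_eq0 !mulr0 addr0.
move: nontriv; rewrite /nontrivial (probE p sigma (fun _ a => B <= nplay a)%N) big_bool /=.
rewrite !(sum_action_prob_nplay_ge (r := _) _ (fun i => act_rate_sym _ i ord0 sym)).
by rewrite !rate_all0 -(prednK B1) !binomial_tail_prob0 addr0 mulr0 ltxx.
Qed.

Lemma sym_BNE_deviation_gain m B (sigma : profile R m.+1) (x y : R) :
  is_BNE p B sigma -> Defs.symmetric sigma -> 0 <= x <= 1 -> 0 <= y <= 1 ->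
  let GH := others_tail m B (sigma ord0) true in
  let GL := others_tail m B (sigma ord0) false in
  x * (p * GH - (1 - p) * GL) + y * ((1 - p) * GH - p * GL)
  <= sigma ord0 true * (p * GH - (1 - p) * GL)
     + sigma ord0 false * ((1 - p) * GH - p * GL).
Proof.
move=> [_ dev] sym x01 y01 /=; pose tau s : R := if s then x else y.
have tau01 s : 0 <= tau s <= 1 by case: s.
have others j : sigma (lift ord0 j) = sigma ord0 by apply/funext => s; exact: sym.
have := dev ord0 tau tau01.
rewrite (payoff_first B (pi := deviate sigma ord0 tau) (st := sigma ord0)); last first.
  by move=> j; rewrite /deviate eq_sym (negbTE (neq_lift _ _)).
rewrite (payoff_first B (pi := sigma) (st := sigma ord0)) //.
by rewrite /deviate eqxx !act_rateE /=; lra.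
Qed.

Lemma sym_BNE_high_signal_invest m B (sigma : profile R m.+1) :
  1 / 2 < p < 1 -> (1 <= B <= m.+1)%N -> sym_nontriv_BNE p B sigma ->
  sigma ord0 true = 1.
Proof.
move=> /andP[hp1 hp2] /andP[B1 Bm] [BNE [sym nontriv]]; have [valid _] := BNE.
have p01 : 0 < p < 1 by apply/andP; split; lra.
have p01w : 0 <= p <= 1 by apply/andP; split; lra.
set st := sigma ord0; have st01 := valid ord0; rewrite -/st in st01.
have /andP[a0 a1] := st01 true; have /andP[b0 b1] := st01 false.
have /andP[rH0 rH1] := act_rate01 true p01w st01.
have /andP[rL0 rL1] := act_rate01 false p01w st01.
have rL_pos := act_rate_gt0_of_nontrivial false p01 B1 valid sym nontriv.
set GH := others_tail m B st true; set GL := others_tail m B st false.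
have gain x y : 0 <= x <= 1 -> 0 <= y <= 1 ->
    x * (p * GH - (1 - p) * GL) + y * ((1 - p) * GH - p * GL)
    <= st true * (p * GH - (1 - p) * GL) + st false * ((1 - p) * GH - p * GL).
  exact: sym_BNE_deviation_gain.
have GL_pos : 0 < GL by rewrite /GL binomial_tail_gt0 ?rL_pos // -ltnS prednK.
have GH0 : 0 <= GH by rewrite /GH binomial_tail_ge0 ?rH0.
have zero01 : 0 <= (0 : R) <= 1 by rewrite lexx ler01.
have one01 : 0 <= (1 : R) <= 1 by rewrite lexx ler01.
have alpha_pos : 0 < p * GH - (1 - p) * GL.
  case: (lerP (st false) (st true)) => ba.
    have : GL <= GH by rewrite /GL /GH le_binomial_tail // !act_rateE /=; nra.
    by nra.
  have beta0 : 0 <= (1 - p) * GH - p * GL.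
    by have := gain (st true) 0 (st01 true) zero01; nra.
  by nra.
by have := gain 1 (st false) one01 (st01 false); nra.
Qed.

End Equilibrium.

(* By case on [w0], so that [in_state true] and [in_state false] compute to [stateH] and [stateL]. *)
Definition in_state (w0 : bool) n : bool -> {ffun 'I_n -> bool} -> {ffun 'I_n -> bool} -> bool :=
  if w0 then @stateH n else @stateL n.

Definition in_state_first_invests (w0 : bool) n :
  bool -> {ffun 'I_n -> bool} -> {ffun 'I_n -> bool} -> bool :=
  if w0 then @stateH_a1 n else @stateL_a1 n.

Lemma in_stateE w0 n w s a : @in_state w0 n w s a = (w == w0).
Proof. by case: w0; case: w. Qed.

Lemma in_state_first_investsE w0 m w s a :
  @in_state_first_invests w0 m.+1 w s a = (w == w0) && a ord0.
Proof.
have first : [exists i : 'I_m.+1, (val i == 0)%N && a i] = a ord0.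
  apply/existsP/idP => [[i /andP[/eqP i0 ai]]|a0]; last by exists ord0.
  by rewrite (_ : ord0 = i) //; apply: val_inj.
by case: w0; rewrite /in_state_first_invests /stateH_a1 /stateL_a1 first; case: w.
Qed.

Section SuccessGap.
Variables (R : realType) (p : R).

Lemma success_gap m (sigma : profile R m.+1) B w0 :
  Defs.symmetric sigma -> (0 < B)%N -> act_rate p w0 (sigma ord0) != 0 ->
  cprob p sigma (@success _ B) (@in_state_first_invests w0 m.+1)
  - cprob p sigma (@success _ B) (@in_state w0 m.+1)
  = (1 - act_rate p w0 (sigma ord0)) * binomial_pmf m (act_rate p w0 (sigma ord0)) B.-1.
Proof.
move=> sym B1 r_neq0; set r := act_rate p w0 (sigma ord0).
have rate i : act_rate p w0 (sigma i) = r by exact: act_rate_sym.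
have prob_first k :
    prob p sigma (fun w _ a => (w == w0) && (a ord0 && (k <= nplay a)%N))
    = 2^-1 * (r * binomial_tail m r k.-1).
  by rewrite prob_state (sum_action_prob_first _ (fun i => rate _)).
have prob_all k : prob p sigma (fun w _ a => (w == w0) && (k <= nplay a)%N)
    = 2^-1 * binomial_tail m.+1 r k.
  by rewrite prob_state (sum_action_prob_nplay_ge _ rate).
have num_first : prob p sigma (fun w s a =>
      success B w s a && @in_state_first_invests w0 m.+1 w s a)
    = 2^-1 * (r * binomial_tail m r B.-1).
  rewrite -prob_first; apply: eq_prob => w s a.
  by rewrite in_state_first_investsE /success andbC -andbA.
have den_first : prob p sigma (@in_state_first_invests w0 m.+1) = 2^-1 * r.
  have := prob_first 0%N; rewrite binomial_tail0 mulr1 => <-; apply: eq_prob => w s a.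
  by rewrite in_state_first_investsE leq0n andbT.
have num_all : prob p sigma (fun w s a => success B w s a && @in_state w0 m.+1 w s a)
    = 2^-1 * binomial_tail m.+1 r B.
  by rewrite -prob_all; apply: eq_prob => w s a; rewrite in_stateE /success andbC.
have den_all : prob p sigma (@in_state w0 m.+1) = 2^-1.
  have := prob_all 0%N; rewrite binomial_tail0 mulr1 => <-; apply: eq_prob => w s a.
  by rewrite in_stateE leq0n andbT.
rewrite /cprob num_first den_first num_all den_all.
by rewrite -(prednK B1) binomial_tailS /= -binomial_tail_subS; field.
Qed.

End SuccessGap.

Lemma success_gap_cvg0 (R : realType) (p : R) (B : nat -> nat)
    (sigma : forall n : nat, profile R n) (w0 : bool) :
  1 / 2 < p < 1 -> (forall n : nat, (0 < n)%N -> (1 <= B n <= n)%N) ->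
  (forall n : nat, (0 < n)%N -> sym_nontriv_BNE p (B n) (sigma n)) ->
  (cprob p (sigma n) (@success n (B n)) (@in_state_first_invests w0 n)
     - cprob p (sigma n) (@success n (B n)) (@in_state w0 n)) @[n --> \oo] --> (0 : R).
Proof.
move=> hp hB hsigma; have /andP[hp1 hp2] := hp; have d0 : 0 < 1 - p by lra.
apply/cvgrPdist_le => e e0; have [N small] := onem_binomial_pmf_small d0 e0.
exists N.+1 => // [[|m]] //= Nm.
have BNE := hsigma m.+1 isT; have [[valid _] [sym _]] := BNE.
have invest := sym_BNE_high_signal_invest hp (hB m.+1 isT) BNE.
have /andP[b0 b1] := valid ord0 false.
set r := act_rate p w0 (sigma m.+1 ord0).
have r_bounds : 1 - p <= r <= 1.
  by rewrite /r act_rateE invest; case: (w0) => /=; apply/andP; split; nra.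
have r01 : 0 <= r <= 1 by case/andP: r_bounds => ? ->; rewrite andbT; lra.
have /andP[B1 _] := hB m.+1 isT.
have r_pos : 0 < r by case/andP: r_bounds => ? _; lra.
rewrite success_gap //; last by rewrite -/r gt_eqF.
rewrite sub0r normrN ger0_norm; first exact: small.
by rewrite mulr_ge0 ?binomial_pmf_ge0 // subr_ge0; case/andP: r01.
Qed.

Theorem lemma3 (R : realType) (p : R) (hp : 1 / 2 < p < 1)
  (B : nat -> nat) (q : R) (hq : 0 <= q <= 1)
  (hB : forall n : nat, (0 < n)%N -> (1 <= B n <= n)%N)
  (hBq : ((B n)%:R / n%:R : R) @[n --> \oo] --> q)
  (sigma : forall n : nat, profile R n)
  (hsigma : forall n : nat, (0 < n)%N -> sym_nontriv_BNE p (B n) (sigma n)) :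
  (cprob p (sigma n) (@success n (B n)) (@stateH_a1 n)
     - cprob p (sigma n) (@success n (B n)) (@stateH n)) @[n --> \oo] --> (0 : R)
  /\
  (cprob p (sigma n) (@success n (B n)) (@stateL_a1 n)
     - cprob p (sigma n) (@success n (B n)) (@stateL n)) @[n --> \oo] --> (0 : R).
Proof.
(* The gap vanishes for every admissible [B]. *)
split; [exact: (success_gap_cvg0 true hp hB hsigma) | exact: (success_gap_cvg0 false hp hB hsigma)].
Qed.
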